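(* Let $\langle A;\cdot\rangle$ be a groupoid with an identity element $1$ (i.e. $1\cdot a=a\cdot 1=a$ for all $a\in A$). Then $\langle A;\cdot\rangle$ is an Abelian algebra if and only if $\langle A;\cdot\rangle$ is a commutative semigroup such that for all $a,b\in A$ the equation $a\cdot x=b$ has at most one solution $x\in A$.
   Context: A groupoid is an algebra $\langle A;\cdot\rangle$ with one binary operation. A polynomial operation of an algebra is an operation obtained from a term by substituting elements of the algebra for some of its variables. An algebra is called Abelian if for every polynomial operation $t(x,y_1,\ldots,y_n)$ and all elements $u,v,c_1,\ldots,c_n,d_1,\ldots,d_n$ of the algebra, $t(u,c_1,\ldots,c_n)=t(u,d_1,\ldots,d_n)$ implies $t(v,c_1,\ldots,c_n)=t(v,d_1,\ldots,d_n)$. *)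

(* Terms of the language of groupoids (one binary operation), with
   variables indexed by nat and constants from the carrier A.
   Evaluating such a term gives exactly the polynomial operations. *)
Inductive gterm (A : Type) : Type :=
  | Var : nat -> gterm A
  | Cst : A -> gterm A
  | Mul : gterm A -> gterm A -> gterm A.

Arguments Var {A} _.
Arguments Cst {A} _.
Arguments Mul {A} _ _.

Fixpoint geval {A : Type} (op : A -> A -> A) (e : nat -> A) (t : gterm A) : A :=
  match t with
  | Var i => e i
  | Cst a => a
  | Mul t1 t2 => op (geval op e t1) (geval op e t2)
  end.

(* Environment: variable 0 is x := u, variable (S i) is y_(i+1) := c i. *)
Definition env {A : Type} (u : A) (c : nat -> A) : nat -> A :=
  fun i => match i with O => u | S k => c k end.

(* Abelian algebra: for every polynomial operation t(x, y1, ..., yn)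
   (a term with constants, in which only finitely many variables occur)
   t(u, c) = t(u, d) implies t(v, c) = t(v, d). *)
Definition abelian_groupoid {A : Type} (op : A -> A -> A) : Prop :=
  forall (t : gterm A) (u v : A) (c d : nat -> A),
    geval op (env u c) t = geval op (env u d) t ->
    geval op (env v c) t = geval op (env v d) t.

Definition has_identity {A : Type} (op : A -> A -> A) : Prop :=
  exists one : A, forall a : A, op one a = a /\ op a one = a.

Definition commutative_semigroup {A : Type} (op : A -> A -> A) : Prop :=
  (forall a b c : A, op (op a b) c = op a (op b c)) /\
  (forall a b : A, op a b = op b a).

Definition at_most_one_solution {A : Type} (op : A -> A -> A) : Prop :=
  forall a b x y : A, op a x = b -> op a y = b -> x = y.


(* In a commutative monoid every polynomial splits as
   t(x, c) = x^k * t(1, c), where k counts the occurrences of x in t; so the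
   term condition reduces to cancelling x^k, which is exactly left
   cancellativity. Conversely, the term condition applied to the polynomials
   (y1 x) y2 and x y1, moving x between the identity and an arbitrary element,
   yields the exchange law (a b) c = b (a c) (hence commutativity and
   associativity) and left cancellation. *)

Section AbelianWithIdentity.
Variables (A : Type) (op : A -> A -> A) (one : A).
Hypothesis abelian : abelian_groupoid op.
Hypothesis op1x : forall a, op one a = a.
Hypothesis opx1 : forall a, op a one = a.

Lemma abelian_left_cancel (a x y : A) : op a x = op a y -> x = y.
Proof.
  intro E.
  assert (Hone := abelian (Mul (Var 0) (Var 1)) a one
                    (fun _ => x) (fun _ => y) E).
  simpl in Hone; rewrite !op1x in Hone; exact Hone.
Qed.

Lemma abelian_exchange (a b c : A) : op (op a b) c = op b (op a c).
Proof.
  assert (Hb := abelian (Mul (Mul (Var 1) (Var 0)) (Var 2)) one b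
                  (fun i => match i with O => a | _ => c end)
                  (fun i => match i with O => one | _ => op a c end)).
  simpl in Hb; rewrite opx1 in Hb; rewrite !op1x in Hb.
  exact (Hb eq_refl).
Qed.

Lemma abelian_comm (a b : A) : op a b = op b a.
Proof. now rewrite <- (opx1 (op a b)), abelian_exchange, opx1. Qed.

Lemma abelian_assoc (a b c : A) : op (op a b) c = op a (op b c).
Proof. now rewrite (abelian_comm a b), abelian_exchange. Qed.

End AbelianWithIdentity.

Section CommutativeMonoid.
Variables (A : Type) (op : A -> A -> A) (one : A).
Hypothesis op1x : forall a, op one a = a.
Hypothesis opx1 : forall a, op a one = a.
Hypothesis opA : forall a b c, op (op a b) c = op a (op b c).
Hypothesis opC : forall a b, op a b = op b a.

Fixpoint opow (u : A) (n : nat) : A :=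
  match n with O => one | S k => op u (opow u k) end.

Fixpoint var0_count (t : gterm A) : nat :=
  match t with
  | Var O => 1
  | Var _ | Cst _ => 0
  | Mul t1 t2 => var0_count t1 + var0_count t2
  end.

Lemma opow_add (u : A) (n m : nat) :
  opow u (n + m) = op (opow u n) (opow u m).
Proof.
  induction n as [|n IHn]; simpl.
  - rewrite op1x; reflexivity.
  - rewrite IHn, opA; reflexivity.
Qed.

Lemma geval_env_factor (t : gterm A) (u : A) (c : nat -> A) :
  geval op (env u c) t = op (opow u (var0_count t)) (geval op (env one c) t).
Proof.
  induction t as [[|k]|a|t1 IH1 t2 IH2]; simpl.
  - rewrite !opx1; reflexivity.
  - rewrite op1x; reflexivity.
  - rewrite op1x; reflexivity.
  - rewrite IH1, IH2, opow_add, !opA; f_equal.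
    rewrite <- !opA; f_equal; apply opC.
Qed.

Lemma left_cancel_abelian :
  at_most_one_solution op -> abelian_groupoid op.
Proof.
  intros cancel t u v c d E.
  rewrite (geval_env_factor t u c), (geval_env_factor t u d) in E.
  rewrite (geval_env_factor t v c), (geval_env_factor t v d).
  rewrite (cancel _ _ _ _ E eq_refl); reflexivity.
Qed.

End CommutativeMonoid.

Theorem mainTheorem1 (A : Type) (op : A -> A -> A) (Hid : has_identity op) :
  abelian_groupoid op <-> (commutative_semigroup op /\ at_most_one_solution op).
Proof.
  destruct Hid as [one Hone].
  assert (op1x : forall a, op one a = a) by (intro a; apply Hone).
  assert (opx1 : forall a, op a one = a) by (intro a; apply Hone).
  split.
  - intro abelian.
    split; [split|].
    + exact (abelian_assoc A op one abelian op1x opx1).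
    + exact (abelian_comm A op one abelian op1x opx1).
    + intros a b x y Ex Ey.
      apply (abelian_left_cancel A op one abelian op1x a); congruence.
  - intros [[opA opC] cancel].
    exact (left_cancel_abelian A op one op1x opx1 opA opC cancel).
Qed.
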